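(* Let $\alpha,\beta$ be fixed nonzero real numbers. There exist constants $C,N>0$, independent of $n$, $\epsilon$ and the point set, such that the following holds: for every $n>N$, every $\epsilon>0$, and every set $P\subset[0,1]^2$ of $n$ points satisfying the separation condition $$\min\{|p-q|:\ p,q\in P,\ p\neq q\}\ge \epsilon,$$ we have $$|\Pi_{\alpha,\beta}(P)|\le C\, n^{4/3}\,\epsilon^{-1}\log(\epsilon^{-1}).$$
   Context: For a finite set $P\subset\mathbb R^2$ and real numbers $\alpha,\beta$, define the set of ordered triples $$\Pi_{\alpha,\beta}(P)=\{(p,q,r)\in P\times P\times P:\ p\cdot q=\alpha \text{ and } p\cdot r=\beta\},$$ where $\cdot$ is the standard dot product on $\mathbb R^2$ (the points $p,q,r$ need not be distinct). Here $|p-q|$ is the Euclidean distance. *)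

From Stdlib Require Import Reals List.
Import ListNotations.
Open Scope R_scope.

Definition pt := (R * R)%type.

Definition dot (p q : pt) : R := fst p * fst q + snd p * snd q.

Definition dist2 (p q : pt) : R :=
  sqrt ((fst p - fst q) ^ 2 + (snd p - snd q) ^ 2).

Definition in_unit_square (p : pt) : Prop :=
  0 <= fst p <= 1 /\ 0 <= snd p <= 1.

Definition Rdec_eqb (x y : R) : bool :=
  if Req_EM_T x y then true else false.

(* The ordered triples (p,q,r) in P^3 with p.q = alpha and p.r = beta.
   P is a duplicate-free list representing the finite point set. *)
Definition Pi_list (alpha beta : R) (P : list pt) : list (pt * pt * pt) :=
  filter (fun t => match t with (p, q, r) =>
            andb (Rdec_eqb (dot p q) alpha) (Rdec_eqb (dot p r) beta) end)
         (list_prod (list_prod P P) P).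

Definition Pi_card (alpha beta : R) (P : list pt) : nat :=
  length (Pi_list alpha beta P).

From Stdlib Require Import Reals List Lia Lra Psatz ZArith.
Import ListNotations.
Open Scope R_scope.

(* Writing d_g(p) for the number of q in P with p.q = g, |Pi(P)| = sum_p d_alpha(p) d_beta(p) is at
   most E_alpha + E_beta, where E_g = sum_p d_g(p)^2 counts triples (p, q, r) with p.q = p.r = g.
   For g <> 0 the points q with p.q = g lie on a line, and two distinct such lines meet at most once,
   so a pair (q, r) with q <> r lies in at most one triple.
   Cutting the line of p into ~ eps^(-1/2) cells along its dominant coordinate, Cauchy-Schwarz bounds
   d_g(p)^2 by eps^(-1/2) times the number of pairs of incident points at distance ~ eps^(1/2); by
   eps-separation each point has O(1/eps) such neighbours, so E_g = O(n eps^(-3/2)).  Counting all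
   pairs instead gives E_g = O(n/eps + n^2), and the minimum of the two bounds is O(n^(4/3)/eps).
   Separation also forces n = O(eps^(-2)), so ln(1/eps) >= 1 once n is large. *)

Section ListSums.
Local Open Scope nat_scope.
Context {A : Type}.

Fixpoint lsum (f : A -> nat) (l : list A) : nat :=
  match l with [] => 0 | x :: t => f x + lsum f t end.

Lemma lsum_app f l1 l2 : lsum f (l1 ++ l2) = lsum f l1 + lsum f l2.
Proof. induction l1; simpl; lia. Qed.

Lemma lsum_ext f g l : (forall x, In x l -> f x = g x) -> lsum f l = lsum g l.
Proof. induction l; simpl; intros H; auto. Qed.

Lemma lsum_le f g l : (forall x, In x l -> f x <= g x) -> lsum f l <= lsum g l.
Proof.
  induction l as [|a l IH]; simpl; intros H; auto.
  specialize (IH (fun x h => H x (or_intror h))). specialize (H a (or_introl eq_refl)). lia.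
Qed.

Lemma lsum_add f g l : lsum (fun x => f x + g x) l = lsum f l + lsum g l.
Proof. induction l; simpl; lia. Qed.

Lemma lsum_mul_l c f l : lsum (fun x => c * f x) l = c * lsum f l.
Proof. induction l; simpl; lia. Qed.

Lemma lsum_mul_r c f l : lsum (fun x => f x * c) l = lsum f l * c.
Proof. induction l; simpl; lia. Qed.

Lemma lsum_const c l : lsum (fun _ => c) l = length l * c.
Proof. induction l; simpl; lia. Qed.

Lemma lsum_le_const f c l : (forall x, In x l -> f x <= c) -> lsum f l <= c * length l.
Proof. intros H. rewrite Nat.mul_comm, <- lsum_const. exact (lsum_le _ _ _ H). Qed.

Lemma lsum_swap (f : A -> A -> nat) l1 l2 :
  lsum (fun x => lsum (f x) l2) l1 = lsum (fun y => lsum (fun x => f x y) l1) l2.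
Proof.
  induction l1; simpl.
  - induction l2; simpl; auto.
  - rewrite IHl1, <- lsum_add. reflexivity.
Qed.

Lemma lsum_filter (b : A -> bool) f l :
  lsum f (filter b l) = lsum (fun x => Nat.b2n (b x) * f x) l.
Proof. induction l; simpl; auto. destruct (b a); simpl; lia. Qed.

Lemma length_filter_lsum (b : A -> bool) l : length (filter b l) = lsum (fun x => Nat.b2n (b x)) l.
Proof. induction l; simpl; auto. destruct (b a); simpl; lia. Qed.

Lemma lsum_b2n_le_1 (b : A -> bool) l : NoDup l ->
  (forall x y, In x l -> In y l -> b x = true -> b y = true -> x = y) ->
  lsum (fun x => Nat.b2n (b x)) l <= 1.
Proof.
  intros Hl Hb. rewrite <- length_filter_lsum.
  destruct (filter b l) as [|x [|y t]] eqn:E; simpl; try lia.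
  assert (Hx : In x (filter b l)) by (rewrite E; simpl; auto).
  assert (Hy : In y (filter b l)) by (rewrite E; simpl; auto).
  apply filter_In in Hx, Hy.
  assert (Hnd : NoDup (filter b l)) by (apply NoDup_filter; auto).
  rewrite E in Hnd. inversion Hnd as [|? ? Hxt _]. exfalso. apply Hxt.
  left. symmetry. apply Hb; tauto.
Qed.

End ListSums.

Lemma lsum_list_prod {A B} (g : A * B -> nat) l1 l2 :
  lsum g (list_prod l1 l2) = lsum (fun x => lsum (fun y => g (x, y)) l2) l1.
Proof.
  induction l1; simpl; auto. rewrite lsum_app, IHl1. f_equal.
  clear. induction l2; simpl; auto.
Qed.

Section Collisions.
Local Open Scope nat_scope.

Lemma sq_add_le_mul (B a s Q : nat) :
  s * s <= B * Q -> (a + s) * (a + s) <= S B * (a * a + Q).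
Proof.
  intros H. destruct B as [|B]; [assert (s = 0) by nia; subst; nia|].
  pose proof (Z.square_nonneg (Z.of_nat (S B) * Z.of_nat a - Z.of_nat s)%Z).
  assert (Hk : S B * (2 * a * s) <= S B * (S B * (a * a) + Q)) by nia.
  apply Nat.mul_le_mono_pos_l in Hk; nia.
Qed.

Definition collisions {A} (f : A -> nat) (l : list A) : nat :=
  lsum (fun x => lsum (fun y => Nat.b2n (f x =? f y)) l) l.

Lemma collisions_filter_split {A} (f : A -> nat) (b : A -> bool) l :
  (forall x y, b x <> b y -> f x <> f y) ->
  collisions f l = collisions f (filter b l) + collisions f (filter (fun x => negb (b x)) l).
Proof.
  intros Hb. unfold collisions. rewrite !lsum_filter, <- lsum_add.
  apply lsum_ext. intros x _. rewrite !lsum_filter.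
  destruct (b x) eqn:Ex; simpl; rewrite ?Nat.add_0_r;
    apply lsum_ext; intros y _; destruct (b y) eqn:Ey; simpl; try lia;
    assert (Hxy : (f x =? f y) = false) by (apply Nat.eqb_neq, Hb; congruence);
    rewrite Hxy; reflexivity.
Qed.

Lemma sq_length_le_mul_collisions {A} (f : A -> nat) (B : nat) (l : list A) :
  (forall x, In x l -> f x < B) -> length l * length l <= B * collisions f l.
Proof.
  revert l. induction B as [|B IH]; intros l Hl.
  - destruct l as [|x l]; simpl; [lia|]. specialize (Hl x (or_introl eq_refl)). lia.
  - set (top := fun x => f x =? B).
    rewrite (collisions_filter_split f top) by (intros x y Hxy Hf; apply Hxy; unfold top; now rewrite Hf).
    rewrite <- (filter_length top l).
    assert (Htop : collisions f (filter top l) = length (filter top l) * length (filter top l)).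
    { unfold collisions. rewrite <- (lsum_const (length (filter top l))).
      apply lsum_ext. intros x Hx.
      rewrite <- (Nat.mul_1_r (length _)), <- (lsum_const 1).
      apply lsum_ext. intros y Hy.
      apply filter_In in Hx, Hy. unfold top in Hx, Hy.
      destruct Hx as [_ Hx], Hy as [_ Hy]. apply Nat.eqb_eq in Hx, Hy.
      rewrite Hx, Hy, Nat.eqb_refl. reflexivity. }
    rewrite Htop. apply sq_add_le_mul, IH.
    intros x Hx. apply filter_In in Hx. destruct Hx as [Hx Hnt].
    specialize (Hl x Hx). unfold top in Hnt. apply Bool.negb_true_iff, Nat.eqb_neq in Hnt. lia.
Qed.

End Collisions.

Definition cell (h x : R) : nat := Z.to_nat (Int_part (x / h)).

Lemma cell_spec h x : 0 < h -> 0 <= x ->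
  INR (cell h x) * h <= x < (INR (cell h x) + 1) * h.
Proof.
  intros Hh Hx. destruct (base_Int_part (x / h)) as [Hlo Hhi].
  assert (Hxh : 0 <= x / h) by (apply Rmult_le_pos; [lra | left; apply Rinv_0_lt_compat; lra]).
  assert (Hnn : (0 <= Int_part (x / h))%Z).
  { assert (IZR (-1) < IZR (Int_part (x / h))) by (simpl; lra).
    apply lt_IZR in H. lia. }
  unfold cell. rewrite INR_IZR_INZ, Z2Nat.id by exact Hnn.
  replace x with (x / h * h) at 2 3 by (field; lra).
  split; [apply Rmult_le_compat_r | apply Rmult_lt_compat_r]; lra.
Qed.

Lemma cell_lt h x (K : nat) : 0 < h -> 0 <= x -> x < INR K * h -> (cell h x < K)%nat.
Proof.
  intros Hh Hx HK. apply INR_lt. destruct (cell_spec h x Hh Hx).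
  apply Rmult_lt_reg_r with h; lra.
Qed.

Lemma cell_eq_abs_lt h x y : 0 < h -> 0 <= x -> 0 <= y -> cell h x = cell h y -> Rabs (x - y) < h.
Proof.
  intros Hh Hx Hy E. destruct (cell_spec h x Hh Hx), (cell_spec h y Hh Hy).
  rewrite E in *. apply Rabs_def1; nra.
Qed.

Definition separated (eps : R) (P : list pt) : Prop :=
  forall p q, In p P -> In q P -> p <> q -> eps <= dist2 p q.

Lemma pt_eq_dec (p q : pt) : {p = q} + {p <> q}.
Proof. decide equality; apply Req_EM_T. Qed.

Lemma dist2_lt p q h :
  Rabs (fst p - fst q) < h -> Rabs (snd p - snd q) < h -> dist2 p q < 2 * h.
Proof.
  intros H1 H2. pose proof (Rabs_pos (fst p - fst q)). pose proof (Rabs_pos (snd p - snd q)).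
  unfold dist2. rewrite <- (sqrt_pow2 (2 * h)) by lra.
  apply sqrt_lt_1_alt. rewrite <- (pow2_abs (fst p - fst q)), <- (pow2_abs (snd p - snd q)).
  split; nra.
Qed.

Lemma separated_eq eps P p q : separated eps P -> In p P -> In q P ->
  Rabs (fst p - fst q) < eps / 2 -> Rabs (snd p - snd q) < eps / 2 -> p = q.
Proof.
  intros Hs Hp Hq H1 H2. destruct (pt_eq_dec p q) as [|Hne]; auto.
  pose proof (dist2_lt p q (eps / 2) H1 H2). specialize (Hs p q Hp Hq Hne). lra.
Qed.

Lemma separated_square_length_le eps P a b w (K : nat) :
  0 < eps -> NoDup P -> separated eps P ->
  (forall p, In p P -> a <= fst p < a + w /\ b <= snd p < b + w) ->
  2 * w / eps <= INR K -> (length P <= K * K)%nat.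
Proof.
  intros He HP Hs Hbox HK.
  assert (Hw : w <= INR K * (eps / 2)).
  { apply Rmult_le_compat_r with (r := eps / 2) in HK; [|lra].
    replace (2 * w / eps * (eps / 2)) with w in HK by (field; lra). exact HK. }
  set (c := fun p : pt => (cell (eps / 2) (fst p - a), cell (eps / 2) (snd p - b))).
  assert (Hc : NoDup (map c P)).
  { apply NoDup_map_NoDup_ForallPairs; auto. intros p q Hp Hq E. injection E as E1 E2.
    destruct (Hbox p Hp), (Hbox q Hq).
    apply cell_eq_abs_lt in E1, E2; try lra.
    apply (separated_eq eps P); auto.
    - replace (fst p - fst q) with (fst p - a - (fst q - a)) by ring. exact E1.
    - replace (snd p - snd q) with (snd p - b - (snd q - b)) by ring. exact E2. }
  assert (Hincl : incl (map c P) (list_prod (seq 0 K) (seq 0 K))).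
  { intros z Hz. apply in_map_iff in Hz. destruct Hz as [p [<- Hp]]. destruct (Hbox p Hp).
    apply in_prod; apply in_seq; (split; [lia | simpl; apply cell_lt; lra]). }
  pose proof (NoDup_incl_length Hc Hincl) as Hlen.
  rewrite length_map, length_prod, length_seq in Hlen. exact Hlen.
Qed.

Definition incid (g : R) (p q : pt) : bool := Rdec_eqb (dot p q) g.

Definition deg (g : R) (P : list pt) (p : pt) : nat := lsum (fun q => Nat.b2n (incid g p q)) P.

Definition energy (g : R) (P : list pt) : nat := lsum (fun p => deg g P p * deg g P p)%nat P.

Definition incidences (g : R) (P : list pt) : nat := lsum (deg g P) P.

Definition pairs_at (g : R) (P : list pt) (rel : pt -> pt -> bool) (p : pt) : nat :=
  lsum (fun q => lsum (fun r => Nat.b2n (incid g p q && incid g p r && rel q r)) P) P.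

Definition triples (g : R) (P : list pt) (rel : pt -> pt -> bool) : nat :=
  lsum (pairs_at g P rel) P.

Definition pt_eqb (p q : pt) : bool := if pt_eq_dec p q then true else false.

Lemma incid_spec g p q : incid g p q = true <-> dot p q = g.
Proof. unfold incid, Rdec_eqb. destruct (Req_EM_T (dot p q) g); split; congruence. Qed.

Lemma incid_comm g p q : incid g p q = incid g q p.
Proof. unfold incid, dot. rewrite (Rmult_comm (fst p)), (Rmult_comm (snd p)). reflexivity. Qed.

Lemma Pi_card_eq a b P : Pi_card a b P = lsum (fun p => deg a P p * deg b P p)%nat P.
Proof.
  unfold Pi_card, Pi_list. rewrite length_filter_lsum, !lsum_list_prod.
  apply lsum_ext. intros p _. unfold deg. rewrite <- lsum_mul_r.
  apply lsum_ext. intros q _. rewrite <- lsum_mul_l. apply lsum_ext. intros r _.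
  unfold incid. destruct (Rdec_eqb (dot p q) a), (Rdec_eqb (dot p r) b); reflexivity.
Qed.

Lemma Pi_card_le_energy a b P : (Pi_card a b P <= energy a P + energy b P)%nat.
Proof. rewrite Pi_card_eq. unfold energy. rewrite <- lsum_add. apply lsum_le. intros. nia. Qed.

Lemma energy_eq_triples g P : energy g P = triples g P (fun _ _ => true).
Proof.
  unfold energy, triples, pairs_at, deg. apply lsum_ext. intros p _. rewrite <- lsum_mul_r.
  apply lsum_ext. intros q _. rewrite <- lsum_mul_l. apply lsum_ext. intros r _.
  destruct (incid g p q), (incid g p r); reflexivity.
Qed.

(* Since g <> 0, the line {x | x.q = g} determines q, so two distinct such lines meet at most once. *)
Lemma incid_pair_unique g p p' q r : g <> 0 -> q <> r ->
  dot p q = g -> dot p r = g -> dot p' q = g -> dot p' r = g -> p = p'.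
Proof.
  destruct p as [p1 p2], p' as [u1 u2], q as [q1 q2], r as [r1 r2]; unfold dot; simpl.
  intros Hg Hqr H1 H2 H3 H4.
  destruct (Req_EM_T (q1 * r2 - q2 * r1) 0) as [Hd|Hd].
  - exfalso. apply Hqr.
    assert (E1 : (r1 - q1) * g = - p2 * (q1 * r2 - q2 * r1)).
    { transitivity (r1 * (p1 * q1 + p2 * q2) - q1 * (p1 * r1 + p2 * r2)); [rewrite H1, H2|]; ring. }
    assert (E2 : (r2 - q2) * g = p1 * (q1 * r2 - q2 * r1)).
    { transitivity (r2 * (p1 * q1 + p2 * q2) - q2 * (p1 * r1 + p2 * r2)); [rewrite H1, H2|]; ring. }
    rewrite Hd, Rmult_0_r in E1, E2.
    apply Rmult_integral in E1 as [E1|]; [|contradiction].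
    apply Rmult_integral in E2 as [E2|]; [|contradiction]. f_equal; lra.
  - assert (Eq : (p1 - u1) * q1 + (p2 - u2) * q2 = 0) by lra.
    assert (Er : (p1 - u1) * r1 + (p2 - u2) * r2 = 0) by lra.
    assert (E1 : (p1 - u1) * (q1 * r2 - q2 * r1) = 0).
    { transitivity (r2 * ((p1 - u1) * q1 + (p2 - u2) * q2) - q2 * ((p1 - u1) * r1 + (p2 - u2) * r2));
        [ring | rewrite Eq, Er; ring]. }
    assert (E2 : (p2 - u2) * (q1 * r2 - q2 * r1) = 0).
    { transitivity (q1 * ((p1 - u1) * r1 + (p2 - u2) * r2) - r1 * ((p1 - u1) * q1 + (p2 - u2) * q2));
        [ring | rewrite Eq, Er; ring]. }
    apply Rmult_integral in E1 as [E1|]; [|contradiction].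
    apply Rmult_integral in E2 as [E2|]; [|contradiction]. f_equal; lra.
Qed.

Lemma common_incid_le_1 g P q r : g <> 0 -> NoDup P -> q <> r ->
  (lsum (fun p => Nat.b2n (incid g p q && incid g p r)) P <= 1)%nat.
Proof.
  intros Hg HP Hqr. apply lsum_b2n_le_1; auto. intros x y _ _ Hx Hy.
  apply Bool.andb_true_iff in Hx as [Hxq Hxr], Hy as [Hyq Hyr].
  rewrite incid_spec in Hxq, Hxr, Hyq, Hyr. eapply incid_pair_unique; eauto.
Qed.

Lemma lsum_pt_eqb_le_1 P q : NoDup P -> (lsum (fun r => Nat.b2n (pt_eqb q r)) P <= 1)%nat.
Proof.
  intros HP. apply lsum_b2n_le_1; auto. intros x y _ _.
  unfold pt_eqb. destruct (pt_eq_dec q x), (pt_eq_dec q y); congruence.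
Qed.

Lemma triples_le g P rel : g <> 0 -> NoDup P ->
  (triples g P rel <= incidences g P +
     lsum (fun q => lsum (fun r => Nat.b2n (negb (pt_eqb q r) && rel q r)) P) P)%nat.
Proof.
  intros Hg HP. unfold triples, pairs_at, incidences. rewrite lsum_swap, <- lsum_add.
  apply lsum_le. intros q _. rewrite lsum_swap.
  transitivity (lsum (fun r => Nat.b2n (pt_eqb q r) * deg g P q +
                   Nat.b2n (negb (pt_eqb q r) && rel q r))%nat P).
  - apply lsum_le. intros r _. unfold pt_eqb. destruct (pt_eq_dec q r) as [<-|Hne]; simpl.
    + rewrite Nat.add_0_r, Nat.add_0_r. unfold deg. apply lsum_le. intros p _.
      rewrite incid_comm. destruct (incid g q p), (rel q q); simpl; lia.
    + destruct (rel q r); simpl.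
      * eapply Nat.le_trans; [|apply (common_incid_le_1 g P q r Hg HP Hne)].
        apply lsum_le. intros p _. destruct (incid g p q), (incid g p r); simpl; lia.
      * transitivity (lsum (fun _ : pt => 0%nat) P); [|rewrite lsum_const; lia].
        apply Nat.eq_le_incl, lsum_ext. intros p _. rewrite Bool.andb_false_r. reflexivity.
  - rewrite lsum_add, lsum_mul_r. pose proof (lsum_pt_eqb_le_1 P q HP). nia.
Qed.

Definition near (h : R) (q r : pt) : bool :=
  if Rlt_dec (Rabs (fst q - fst r)) h then
    if Rlt_dec (Rabs (snd q - snd r)) h then true else false
  else false.

Lemma near_spec h q r :
  near h q r = true <-> Rabs (fst q - fst r) < h /\ Rabs (snd q - snd r) < h.
Proof.
  unfold near. destruct (Rlt_dec (Rabs (fst q - fst r)) h), (Rlt_dec (Rabs (snd q - snd r)) h);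
    split; intuition congruence.
Qed.

Lemma abs_diff_snd_le g p q r : g <> 0 -> dot p q = g -> dot p r = g ->
  Rabs (fst p) <= Rabs (snd p) -> Rabs (snd q - snd r) <= Rabs (fst q - fst r).
Proof.
  destruct p as [p1 p2], q as [q1 q2], r as [r1 r2]; unfold dot; simpl. intros Hg Hq Hr Hp.
  assert (Hp2 : 0 < Rabs p2).
  { apply Rabs_pos_lt. intros E. subst p2. rewrite Rabs_R0 in Hp.
    assert (p1 = 0) by (destruct (Req_EM_T p1 0) as [|Hn]; [auto | pose proof (Rabs_pos_lt p1 Hn); lra]).
    subst p1. apply Hg. rewrite <- Hq. ring. }
  assert (E : Rabs p2 * Rabs (q2 - r2) = Rabs p1 * Rabs (q1 - r1)).
  { rewrite <- !Rabs_mult, <- Rabs_Ropp. f_equal. lra. }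
  apply Rmult_le_reg_l with (Rabs p2); auto. rewrite E.
  apply Rmult_le_compat_r; auto using Rabs_pos.
Qed.

Definition swap (p : pt) : pt := (snd p, fst p).

Lemma abs_diff_fst_le g p q r : g <> 0 -> dot p q = g -> dot p r = g ->
  Rabs (snd p) <= Rabs (fst p) -> Rabs (fst q - fst r) <= Rabs (snd q - snd r).
Proof.
  intros Hg Hq Hr Hp. apply (abs_diff_snd_le g (swap p) (swap q) (swap r)); auto;
    unfold swap, dot in *; simpl in *; lra.
Qed.

Lemma deg_sq_le_pairs_by_coord g P (M : nat) p (c : pt -> R) rel : (0 < M)%nat ->
  (forall q, In q P -> 0 <= c q <= 1) ->
  (forall q r, In q P -> In r P -> incid g p q = true -> incid g p r = true ->
     Rabs (c q - c r) < / INR M -> rel q r = true) ->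
  (deg g P p * deg g P p <= S M * pairs_at g P rel p)%nat.
Proof.
  intros HM Hc Hrel.
  assert (HMR : 0 < INR M) by (apply lt_0_INR; exact HM).
  assert (Hh : 0 < / INR M) by (apply Rinv_0_lt_compat; exact HMR).
  set (f := fun q => cell (/ INR M) (c q)).
  unfold deg. rewrite <- length_filter_lsum.
  eapply Nat.le_trans.
  { apply (sq_length_le_mul_collisions f (S M)). intros q Hq.
    apply filter_In in Hq as [Hq _]. destruct (Hc q Hq). apply cell_lt; auto.
    rewrite S_INR, Rmult_plus_distr_r, Rinv_r, Rmult_1_l by lra.
    pose proof (Rinv_0_lt_compat _ HMR). lra. }
  apply Nat.mul_le_mono_l. unfold collisions, pairs_at.
  rewrite lsum_filter. apply lsum_le. intros q Hq.
  rewrite lsum_filter, <- lsum_mul_l. apply lsum_le. intros r Hr.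
  destruct (incid g p q) eqn:Eq, (incid g p r) eqn:Er; simpl; try lia.
  destruct (f q =? f r) eqn:Ef; simpl; try lia.
  apply Nat.eqb_eq in Ef. destruct (Hc q Hq), (Hc r Hr).
  rewrite (Hrel q r Hq Hr Eq Er); [simpl; lia|].
  apply cell_eq_abs_lt in Ef; auto.
Qed.

Lemma deg_sq_le_near_pairs g P (M : nat) p : g <> 0 -> (0 < M)%nat ->
  (forall q, In q P -> in_unit_square q) ->
  (deg g P p * deg g P p <= S M * pairs_at g P (near (/ INR M)) p)%nat.
Proof.
  intros Hg HM Hsq.
  destruct (Rle_dec (Rabs (fst p)) (Rabs (snd p))) as [Hp|Hp].
  - apply deg_sq_le_pairs_by_coord with (c := fst); auto.
    + intros q Hq. apply Hsq, Hq.
    + intros q r _ _ Hq Hr Hc. rewrite incid_spec in Hq, Hr. apply near_spec.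
      pose proof (abs_diff_snd_le g p q r Hg Hq Hr Hp). lra.
  - apply deg_sq_le_pairs_by_coord with (c := snd); auto.
    + intros q Hq. apply Hsq, Hq.
    + intros q r _ _ Hq Hr Hc. rewrite incid_spec in Hq, Hr. apply near_spec.
      pose proof (abs_diff_fst_le g p q r Hg Hq Hr ltac:(lra)). lra.
Qed.

Lemma exists_nat_ceil x : 0 <= x -> exists m : nat, x <= INR m <= x + 1.
Proof.
  intros Hx. destruct (archimed x) as [H1 H2].
  assert (Hu : (0 <= up x)%Z) by (apply le_IZR; lra).
  exists (Z.to_nat (up x)). rewrite INR_IZR_INZ, Z2Nat.id by exact Hu. lra.
Qed.

(* Whichever of sqrt k and n^(1/3) is larger, one of the two energy bounds is at most n^(4/3) k. *)
Lemma le_four_thirds_of_min (n k T : R) : 1 <= n -> 4 <= k ->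
  T <= 48 * n * sqrt k * k -> T <= 3 * n * k + n * n -> T <= 48 * Rpower n (4 / 3) * k.
Proof.
  intros Hn Hk HT1 HT2.
  set (a := Rpower n (1 / 3)).
  assert (Ha3 : a * a * a = n).
  { unfold a. rewrite <- !Rpower_plus. replace (1 / 3 + 1 / 3 + 1 / 3) with 1 by field.
    apply Rpower_1. lra. }
  assert (Ha0 : 0 < a) by apply exp_pos.
  assert (Ha1 : 1 <= a) by (destruct (Rle_lt_dec 1 a); [auto | nra]).
  replace (Rpower n (4 / 3)) with (n * a).
  2: { unfold a. replace (4 / 3) with (1 + 1 / 3) by field. rewrite Rpower_plus, Rpower_1; lra. }
  assert (Hnak : 0 <= n * a * k) by (apply Rmult_le_pos; nra).
  destruct (Rle_lt_dec (sqrt k) a) as [Hsa|Hsa].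
  - assert (n * sqrt k * k <= n * a * k) by (apply Rmult_le_compat_r; nra). nra.
  - assert (Hak : a * a <= k) by (rewrite <- (sqrt_sqrt k) by lra; nra).
    assert (n * n <= n * a * k) by (rewrite <- Ha3 at 2; nra).
    nra.
Qed.

Section SeparatedUnitSquare.

Variables (eps : R) (P : list pt).
Hypotheses (He : 0 < eps) (HP : NoDup P) (Hs : separated eps P)
  (Hsq : forall p, In p P -> in_unit_square p).

Lemma inv_gt_4_of_length : 400 < INR (length P) -> 4 < / eps.
Proof.
  intros Hn. assert (Hk : 0 < / eps) by (apply Rinv_0_lt_compat, He).
  destruct (exists_nat_ceil (4 / eps)) as [K [HK1 HK2]]; [unfold Rdiv; lra|].
  assert (HPK : (length P <= K * K)%nat).
  { apply (separated_square_length_le eps P 0 0 2); auto.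
    intros p Hp. destruct (Hsq p Hp) as [[? ?] [? ?]]. lra. }
  apply le_INR in HPK. rewrite mult_INR in HPK.
  destruct (Rlt_le_dec 4 (/ eps)) as [|Hle]; auto. exfalso.
  assert (INR K <= 17) by (unfold Rdiv in HK2; lra).
  pose proof (pos_INR K). nra.
Qed.

Lemma separated_near_eq (M : nat) q r :
  2 / eps <= INR M -> In q P -> In r P -> near (/ INR M) q r = true -> q = r.
Proof.
  intros HM Hq Hr Hn. apply near_spec in Hn as [H1 H2].
  assert (Hinv : / INR M <= eps / 2).
  { replace (eps / 2) with (/ (2 / eps)) by (field; lra).
    apply Rinv_le_contravar; auto. apply Rdiv_lt_0_compat; lra. }
  apply (separated_eq eps P); auto; lra.
Qed.

Lemma near_count_le h (K : nat) q :
  4 * h / eps <= INR K -> (lsum (fun r => Nat.b2n (near h q r)) P <= K * K)%nat.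
Proof.
  intros HK. rewrite <- length_filter_lsum.
  apply (separated_square_length_le eps _ (fst q - h) (snd q - h) (2 * h)); auto.
  - apply NoDup_filter, HP.
  - intros x y Hx Hy. apply filter_In in Hx as [Hx _], Hy as [Hy _]. apply Hs; auto.
  - intros r Hr. apply filter_In in Hr as [_ Hr]. apply near_spec in Hr as [H1 H2].
    apply Rabs_def2 in H1, H2. lra.
  - replace (2 * (2 * h) / eps) with (4 * h / eps) by (field; lra). exact HK.
Qed.

Variable g : R.
Hypothesis Hg : g <> 0.

(* At scale 1/M <= eps/2 only diagonal pairs are near, so deg^2 <= (M+1) deg. *)
Lemma deg_le (M : nat) p : 2 / eps <= INR M -> (deg g P p <= S M)%nat.
Proof.
  intros HM.
  assert (HM0 : (0 < M)%nat).
  { apply INR_lt. simpl. assert (0 < 2 / eps) by (apply Rdiv_lt_0_compat; lra). lra. }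
  assert (Hpairs : (pairs_at g P (near (/ INR M)) p <= deg g P p)%nat).
  { unfold pairs_at, deg. apply lsum_le. intros q Hq.
    transitivity (Nat.b2n (incid g p q) * lsum (fun r => Nat.b2n (pt_eqb q r)) P)%nat.
    - rewrite <- lsum_mul_l. apply lsum_le. intros r Hr.
      destruct (near (/ INR M) q r) eqn:En.
      + pose proof (separated_near_eq M q r HM Hq Hr En). subst r.
        unfold pt_eqb. destruct (pt_eq_dec q q); [|congruence].
        destruct (incid g p q); simpl; lia.
      + rewrite Bool.andb_false_r. simpl. lia.
    - pose proof (lsum_pt_eqb_le_1 P q HP). nia. }
  pose proof (deg_sq_le_near_pairs g P M p Hg HM0 Hsq). nia.
Qed.

Lemma incidences_le (M : nat) : 2 / eps <= INR M -> (incidences g P <= S M * length P)%nat.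
Proof. intros HM. apply lsum_le_const. intros p _. apply deg_le, HM. Qed.

Lemma energy_le_near (M M' K : nat) : (0 < M)%nat -> 2 / eps <= INR M' ->
  4 * / INR M / eps <= INR K ->
  (energy g P <= S M * (S M' * length P + length P * (K * K)))%nat.
Proof.
  intros HM HM' HK.
  transitivity (S M * triples g P (near (/ INR M)))%nat.
  { unfold energy, triples. rewrite <- lsum_mul_l. apply lsum_le. intros p _.
    apply deg_sq_le_near_pairs; auto. }
  apply Nat.mul_le_mono_l. eapply Nat.le_trans; [apply triples_le; auto|].
  apply Nat.add_le_mono; [apply incidences_le, HM'|].
  rewrite Nat.mul_comm. apply lsum_le_const. intros q _.
  eapply Nat.le_trans; [|apply (near_count_le (/ INR M) K q HK)].
  apply lsum_le. intros r _. destruct (near _ q r); rewrite ?Bool.andb_true_r, ?Bool.andb_false_r.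
  - destruct (negb _); simpl; lia.
  - simpl. lia.
Qed.

Lemma energy_le_far (M' : nat) : 2 / eps <= INR M' ->
  (energy g P <= S M' * length P + length P * length P)%nat.
Proof.
  intros HM'. rewrite energy_eq_triples.
  eapply Nat.le_trans; [apply triples_le; auto|].
  apply Nat.add_le_mono; [apply incidences_le, HM'|].
  apply lsum_le_const. intros q _. rewrite <- (Nat.mul_1_l (length P)).
  apply lsum_le_const. intros r _. destruct (negb _); simpl; lia.
Qed.

(* Cells of width 1/M with M ~ eps^(-1/2); a cell-sized neighbourhood then holds O(1/eps) points. *)
Lemma energy_le_sqrt : 4 <= / eps ->
  INR (energy g P) <= 48 * INR (length P) * sqrt (/ eps) * / eps.
Proof.
  intros Hk.
  set (k := / eps) in *. set (s := sqrt k). set (n := INR (length P)).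
  assert (Hss : s * s = k) by (apply sqrt_sqrt; lra).
  assert (Hs0 : 0 <= s) by apply sqrt_pos.
  assert (Hs2 : 2 <= s) by nra.
  destruct (exists_nat_ceil s) as [M [HM1 HM2]]; [lra|].
  destruct (exists_nat_ceil (2 * k)) as [M' [HM'1 HM'2]]; [lra|].
  destruct (exists_nat_ceil (4 * s)) as [K [HK1 HK2]]; [lra|].
  assert (HM0 : (0 < M)%nat) by (apply INR_lt; simpl; lra).
  assert (HK : 4 * / INR M / eps <= INR K).
  { assert (/ INR M <= / s) by (apply Rinv_le_contravar; lra).
    replace (4 * / INR M / eps) with (4 * k * / INR M) by (unfold k; field; lra).
    replace (4 * s) with (4 * k * / s) in HK1 by (rewrite <- Hss; field; lra).
    assert (0 <= 4 * k) by lra. nra. }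
  pose proof (energy_le_near M M' K HM0 ltac:(unfold Rdiv; fold k; lra) HK) as HE.
  apply le_INR in HE. rewrite mult_INR, plus_INR, !mult_INR, !S_INR in HE. fold n in HE.
  assert (Hn : 0 <= n) by apply pos_INR.
  pose proof (pos_INR K). pose proof (pos_INR M').
  assert (HKK : INR K * INR K <= (4 * s + 1) * (4 * s + 1)) by nra.
  assert (Hsum : INR M' + 1 + INR K * INR K <= 24 * k) by nra.
  assert (Hinner : (INR M' + 1) * n + n * (INR K * INR K) <= 24 * k * n).
  { replace ((INR M' + 1) * n + n * (INR K * INR K)) with ((INR M' + 1 + INR K * INR K) * n) by ring.
    apply Rmult_le_compat_r; auto. }
  assert (0 <= (INR M' + 1) * n + n * (INR K * INR K)) by nra.
  nra.
Qed.

Lemma energy_le_sq : 4 <= / eps ->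
  INR (energy g P) <= 3 * INR (length P) * / eps + INR (length P) * INR (length P).
Proof.
  intros Hk.
  destruct (exists_nat_ceil (2 * / eps)) as [M' [HM'1 HM'2]]; [lra|].
  pose proof (energy_le_far M' ltac:(unfold Rdiv; lra)) as HE.
  apply le_INR in HE. rewrite plus_INR, !mult_INR, S_INR in HE.
  pose proof (pos_INR (length P)). nra.
Qed.

Lemma energy_le_four_thirds : 1 <= INR (length P) -> 4 <= / eps ->
  INR (energy g P) <= 48 * Rpower (INR (length P)) (4 / 3) * / eps.
Proof.
  intros Hn Hk. apply le_four_thirds_of_min; auto.
  - apply energy_le_sqrt, Hk.
  - apply energy_le_sq, Hk.
Qed.

End SeparatedUnitSquare.

Theorem theorem2 (alpha beta : R) (Halpha : alpha <> 0) (Hbeta : beta <> 0) :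
  exists C N : R, 0 < C /\ 0 < N /\
    forall (n : nat) (eps : R) (P : list pt),
      N < INR n ->
      0 < eps ->
      NoDup P ->
      length P = n ->
      (forall p, In p P -> in_unit_square p) ->
      (forall p q, In p P -> In q P -> p <> q -> eps <= dist2 p q) ->
      INR (Pi_card alpha beta P)
        <= C * Rpower (INR n) (4 / 3) * / eps * ln (/ eps).
Proof.
  exists 96, 400. split; [lra|]. split; [lra|].
  intros n eps P Hn He HP Hlen Hsq Hs. subst n.
  assert (Hk : 4 < / eps) by (apply (inv_gt_4_of_length eps P); auto).
  pose proof (energy_le_four_thirds eps P He HP Hs Hsq alpha Halpha ltac:(lra) ltac:(lra)).
  pose proof (energy_le_four_thirds eps P He HP Hs Hsq beta Hbeta ltac:(lra) ltac:(lra)).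
  pose proof (le_INR _ _ (Pi_card_le_energy alpha beta P)) as HPi. rewrite plus_INR in HPi.
  assert (Hln : 1 <= ln (/ eps)).
  { rewrite <- ln_exp at 1. left. apply ln_increasing; [apply exp_pos|].
    pose proof exp_le_3. lra. }
  assert (0 <= 96 * Rpower (INR (length P)) (4 / 3) * / eps).
  { assert (0 < Rpower (INR (length P)) (4 / 3)) by apply exp_pos. nra. }
  nra.
Qed.
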